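(* Consider Method 1.1 (described in the context) applied to the problem $\min\{f(x):x\in D\}$. Suppose the method does not terminate, the generated sequence $\{y_i\}_{i\in K}$ is bounded, and the numbers $\varepsilon_k$ are chosen so that $\varepsilon_k>0$ for all $k\in K$ and $\varepsilon_k\to0$ as $k\to\infty$. Then (the sequence $\{x_k\}_{k\in K}$ is defined for all $k$ and) every limit point of $\{x_k\}_{k\in K}$ belongs to $X^*$; and if moreover $f(x_{k+1})\ge f(x_k)$ for all $k\in K$, then $\operatorname{dist}(x_k,X^* )\to0$ as $k\to\infty$.
   Context: Setting: $f_j$, $j\in J=\{1,\dots,m\}$, are convex functions on $\mathbb{R}^n$; $D=\{x:f_j(x)\le0,\ j\in J\}$; $f$ is continuous on $\mathbb{R}^n$ and attains its minimum on $D$; each $D_j=\{x:f_j(x)\le0\}$ has nonempty interior. Notation: $K=\{0,1,2,\dots\}$; $F(x)=\max_{j}f_j(x)$; $D_\varepsilon=\{x:F(x)\le\varepsilon\}$; $f^*=\min_D f$; $X^*=\{x\in D: f(x)=f^*\}$; $E^*=\{x: f(x)\le f^*\}$; $W^1(x,D_j)=\{a\in\mathbb{R}^n:\|a\|=1,\ \langle a,z-x\rangle\le0\ \forall z\in D_j\}$. Method 1.1: Fix $x^*\in X^*$. Choose a closed convex $M_0\subset\mathbb{R}^n$ with $x^*\in M_0$, points $v^j\in\operatorname{int}D_j$ ($j\in J$), a number $\varepsilon_0\ge0$, and a constant $q\in[1,\infty)$; set $k=0$, $i=0$. Step 1: choose $y_i\in M_i\cap E^*$. Step 2: let $J_i=\{j\in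 J: y_i\notin D_j\}$; if $J_i=\emptyset$, stop. Step 3: if $y_i\notin D_{\varepsilon_k}$, choose a closed convex $G_i\subset\mathbb{R}^n$ with $x^*\in G_i$ and set $Q_i=M_i\cap G_i$; otherwise set $i_k=i$, $x_k=y_{i_k}$, choose a closed convex $Q_i$ with $x^*\in Q_i$, choose $\varepsilon_{k+1}\ge0$ and increase $k$ by one. Step 4: for each $j\in J_i$ choose $z_i^j$ in the open segment $(v^j,y_i)$ with $z_i^j\notin\operatorname{int}D_j$ such that for some $q_i^j\in[1,q]$ the point $y_i+q_i^j(z_i^j-y_i)$ lies in $D_j$; for $j\in J\setminus J_i$ set $z_i^j=y_i$. Step 5: choose $H_i\subset J_i$ containing an index $j_i$ with $\|y_i-z_i^{j_i}\|=\max_{j\in J_i}\|y_i-z_i^j\|$. Step 6: for each $j\in H_i$ choose a nonempty finite set $A_i^j\subset W^1(z_i^j,D_j)$, set $M_{i+1}=Q_i\cap\{x:\langle a,x-z_i^j\rangle\le0\ \forall j\in H_i,\ a\in A_i^j\}$, increase $i$ by one and go to Step 1. *)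

(* Vectors of R^n are row vectors 'rV[R]_n
   over an abstract R : realType, with the Euclidean inner product and norm
   defined below (the topology of 'rV[R]_n from MathComp-Analysis is the usual
   one, so `closed`, `interior`, `continuous` are the standard notions). *)
From HB Require Import structures.
From mathcomp Require Import all_boot all_order all_algebra.
From mathcomp Require Import all_classical all_reals topology normedtype.
Set Implicit Arguments. Unset Strict Implicit. Unset Printing Implicit Defensive.
Import Order.TTheory GRing.Theory Num.Theory.
Import numFieldNormedType.Exports.
Local Open Scope classical_set_scope.
Local Open Scope ring_scope.

Definition dotp {R : realType} {n : nat} (a b : 'rV[R]_n) : R :=
  \sum_(i < n) a ord0 i * b ord0 i.
Definition enorm {R : realType} {n : nat} (a : 'rV[R]_n) : R :=
  Num.sqrt (dotp a a).

Definition convex_setE {R : realType} {n : nat} (A : set 'rV[R]_n) : Prop :=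
  forall x y (t : R), A x -> A y -> 0 <= t -> t <= 1 ->
    A (t *: x + (1 - t) *: y).

Definition convex_funE {R : realType} {n : nat} (g : 'rV[R]_n -> R) : Prop :=
  forall x y (t : R), 0 <= t -> t <= 1 ->
    g (t *: x + (1 - t) *: y) <= t * g x + (1 - t) * g y.

Definition Dj {R : realType} {n m : nat} (fs : 'I_m -> 'rV[R]_n -> R) (j : 'I_m)
  : set 'rV[R]_n := [set x | fs j x <= 0].
Definition Dset {R : realType} {n m : nat} (fs : 'I_m -> 'rV[R]_n -> R)
  : set 'rV[R]_n := [set x | forall j, fs j x <= 0].
(* D_eps = {x : F(x) <= eps}, F = max_j f_j (i.e. f_j(x) <= eps for all j) *)
Definition Deps {R : realType} {n m : nat} (fs : 'I_m -> 'rV[R]_n -> R) (eps : R)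
  : set 'rV[R]_n := [set x | forall j, fs j x <= eps].

(* f^* = min_D f (= inf, the minimum being attained) *)
Definition fstar {R : realType} {n m : nat} (fs : 'I_m -> 'rV[R]_n -> R)
  (f : 'rV[R]_n -> R) : R := inf (f @` Dset fs).
Definition Xstar {R : realType} {n m : nat} (fs : 'I_m -> 'rV[R]_n -> R)
  (f : 'rV[R]_n -> R) : set 'rV[R]_n :=
  [set x | Dset fs x /\ f x = fstar fs f].
Definition Estar {R : realType} {n m : nat} (fs : 'I_m -> 'rV[R]_n -> R)
  (f : 'rV[R]_n -> R) : set 'rV[R]_n := [set x | f x <= fstar fs f].

Definition W1 {R : realType} {n : nat} (x : 'rV[R]_n) (C : set 'rV[R]_n)
  : set 'rV[R]_n :=
  [set a | enorm a = 1 /\ forall z, C z -> dotp a (z - x) <= 0].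

Definition open_seg {R : realType} {n : nat} (v y : 'rV[R]_n) : set 'rV[R]_n :=
  [set z | exists t : R, 0 < t /\ t < 1 /\ z = (1 - t) *: v + t *: y].

Definition dist_to_set {R : realType} {n : nat} (x : 'rV[R]_n) (X : set 'rV[R]_n) : R :=
  inf [set enorm (x - z) | z in X].

Definition seq_cluster_pt {R : realType} {n : nat} (u : nat -> 'rV[R]_n)
  (p : 'rV[R]_n) : Prop :=
  forall e : R, 0 < e -> forall N : nat, exists k, (N <= k)%N /\ enorm (u k - p) < e.

(* A (non-terminating) run of Method 1.1.  The counter k in force at the start
   of iteration i is kc i; x k is the point x_k = y_{i_k}; eps k is eps_k.
   Q, G, M are the sets of the method, z i j = z_i^j, H i = H_i,
   A i j = A_i^j (a finite set given as a list).  Step 2 is not recorded here: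
   non-termination (J_i <> empty for every i) is a separate hypothesis. *)
Definition method11_run {R : realType} {n m : nat}
  (fs : 'I_m -> 'rV[R]_n -> R) (f : 'rV[R]_n -> R) (xstar : 'rV[R]_n)
  (v : 'I_m -> 'rV[R]_n) (q : R) (eps : nat -> R)
  (M Q G : nat -> set 'rV[R]_n) (y : nat -> 'rV[R]_n)
  (z : nat -> 'I_m -> 'rV[R]_n) (H : nat -> set 'I_m)
  (A : nat -> 'I_m -> seq 'rV[R]_n) (kc : nat -> nat) (x : nat -> 'rV[R]_n)
  : Prop :=
  (closed (M 0%N) /\ convex_setE (M 0%N) /\ M 0%N xstar /\
   (forall j, interior (Dj fs j) (v j)) /\ 0 <= eps 0%N /\ 1 <= q /\
   kc 0%N = 0%N) /\
  forall i : nat,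
  (* Step 1 *)
  (M i (y i) /\ Estar fs f (y i)) /\
  (* Step 3 *)
  (~ Deps fs (eps (kc i)) (y i) ->
     closed (G i) /\ convex_setE (G i) /\ G i xstar /\
     Q i = M i `&` G i /\ kc i.+1 = kc i) /\
  (Deps fs (eps (kc i)) (y i) ->
     x (kc i) = y i /\ closed (Q i) /\ convex_setE (Q i) /\ Q i xstar /\
     kc i.+1 = (kc i).+1) /\
  (* Step 4 *)
  (forall j, ~ Dj fs j (y i) ->
     open_seg (v j) (y i) (z i j) /\ ~ interior (Dj fs j) (z i j) /\
     exists qq : R, 1 <= qq /\ qq <= q /\ Dj fs j (y i + qq *: (z i j - y i))) /\
  (forall j, Dj fs j (y i) -> z i j = y i) /\
  (* Step 5 *)
  (forall j, H i j -> ~ Dj fs j (y i)) /\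
  (exists ji, H i ji /\
     forall j, ~ Dj fs j (y i) -> enorm (y i - z i j) <= enorm (y i - z i ji)) /\
  (* Step 6 *)
  (forall j, H i j -> A i j != [::] /\
     forall a, a \in A i j -> W1 (z i j) (Dj fs j) a) /\
  M i.+1 = Q i `&` [set w | forall j, H i j -> forall a, a \in A i j ->
                                 dotp a (w - z i j) <= 0].

(* If the counter k stalled from iteration i0 on, every later y_i would lie
   outside D_{eps_k} but inside all the cuts made since i0.  As D_j contains a
   ball of radius r around v^j and z_l^j lies on the segment (v^j, y_l), the
   cut made at z_l^j with unit normal a satisfies, for the index j = j_l of
   Step 5, every i > l and a bound c on |y_l - v^j|,
     r/2 |y_l - z_l^j| <= c <a, y_l - z_l^j> <= c <a, y_l - y_i>,
   so by the choice of j_l all steps |y_l - z_l^j| are O(|y_l - y_i|).  Near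
   a cluster point of the bounded {y_i} they vanish, hence the points
   y_l + q_l^j (z_l^j - y_l) of D_j come close to y_l, and continuity of the
   convex f_j puts y_l in D_{eps_k}: a contradiction.  So every x_k = y_{i_k}
   exists and lies in D_{eps_k} /\ E^*, its cluster points lie in
   D /\ E^* = X^*, and boundedness makes the distance from x_k to X^* tend
   to 0.  Estimates are carried out in the sup norm `|_|, which induces the
   topology of 'rV, and compared with the Euclidean norm enorm of the
   statement. *)

From HB Require Import structures.
From mathcomp Require Import all_boot all_order all_algebra.
From mathcomp Require Import all_classical all_reals topology normedtype.
From mathcomp Require Import ring lra.
Import Order.TTheory GRing.Theory Num.Theory.
Import numFieldNormedType.Exports.
Local Open Scope classical_set_scope.
Local Open Scope ring_scope.

Section EuclideanNorm.
Context {R : realType} {n : nat}.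
Implicit Types (u w a b c : 'rV[R]_n).

Lemma coord_le_mx_norm u i : `|u ord0 i| <= `|u|.
Proof.
have /mapP[j _ ->] : `|u ord0 i| \in [seq `|u x.1 x.2| | x : 'I_1 * 'I_n].
  by apply/mapP; exists (ord0, i) => //=; rewrite mem_enum.
by rewrite [leRHS]/Num.Def.normr /= mx_normrE; apply/bigmax_geP; right; exists j.
Qed.

Lemma mx_norm_le_coord u e :
  0 <= e -> (forall i, `|u ord0 i| <= e) -> `|u| <= e.
Proof.
move=> e0 ue; rewrite /Num.Def.normr /= mx_normrE (bigmax_le _ e0) //=.
by move=> [i j] _; rewrite /= (ord1 i); apply: ue.
Qed.

Lemma dotp_ge0 u : 0 <= dotp u u.
Proof. by apply: sumr_ge0 => i _; rewrite -expr2 sqr_ge0. Qed.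

Lemma dotpDr a b c : dotp a (b + c) = dotp a b + dotp a c.
Proof. by rewrite /dotp -big_split /=; apply: eq_bigr => i _; rewrite mxE mulrDr. Qed.

Lemma dotpZr a (k : R) b : dotp a (k *: b) = k * dotp a b.
Proof. by rewrite /dotp mulr_sumr; apply: eq_bigr => i _; rewrite mxE mulrCA. Qed.

Lemma dotpBr a b c : dotp a (b - c) = dotp a b - dotp a c.
Proof. by rewrite dotpDr -scaleN1r dotpZr mulN1r. Qed.

Lemma enorm_unit_dotp a : enorm a = 1 -> dotp a a = 1.
Proof. by move=> a1; rewrite -(sqr_sqrtr (dotp_ge0 a)) -/(enorm a) a1 expr1n. Qed.

Lemma mx_norm_le_enorm u : `|u| <= enorm u.
Proof.
apply: mx_norm_le_coord => [|i]; first exact: sqrtr_ge0.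
rewrite -sqrtr_sqr ler_sqrt ?dotp_ge0 // /dotp (bigD1 i) //= expr2 lerDl.
by apply: sumr_ge0 => k _; rewrite -expr2 sqr_ge0.
Qed.

Lemma enorm_le_mx_norm u : enorm u <= n.+1%:R * `|u|.
Proof.
rewrite /enorm -[leRHS]ger0_norm ?mulr_ge0 // -sqrtr_sqr ler_sqrt ?sqr_ge0 //.
apply: (@le_trans _ _ (\sum_(i < n) `|u| ^+ 2)).
  apply: ler_sum => i _; rewrite -expr2 -real_normK ?num_real //.
  by rewrite lerXn2r ?nnegrE ?normr_ge0 // coord_le_mx_norm.
rewrite sumr_const card_ord exprMn -[_ *+ n]mulr_natl.
apply: ler_wpM2r; first exact: sqr_ge0.
by rewrite -natrX ler_nat (leq_trans (leqnSn n)) // leq_pmulr.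
Qed.

Lemma dotp_le_mx_norm a w : dotp a w <= n%:R * (`|a| * `|w|).
Proof.
apply: (@le_trans _ _ (\sum_(i < n) `|a| * `|w|)).
  apply: ler_sum => i _.
  apply: (le_trans (ler_norm _)); rewrite normrM.
  by apply: ler_pM; rewrite ?normr_ge0 ?coord_le_mx_norm.
by rewrite sumr_const card_ord mulr_natl.
Qed.

Lemma bounded_seq_cluster_pt {u : nat -> 'rV[R]_n} {r} :
  (forall k, enorm (u k) <= r) -> exists p, seq_cluster_pt u p.
Proof.
move=> ur.
pose cube := [set w : 'rV[R]_n | forall i, `[-r, r]%classic (w ord0 i)].
have cube_compact : compact cube.
  exact: (@rV_compact R n _ (fun=> @segment_compact R (-r) r)).
have u_cube : (u @ \oo) cube.
  exists 0%N => // k _ i; rewrite /= in_itv /= -ler_norml.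
  by rewrite (le_trans (coord_le_mx_norm _ _)) // (le_trans (mx_norm_le_enorm _)).
have [p [_ p_cluster]] := cube_compact _ (fmap_proper_filter _ _) u_cube.
exists p => e e0 N.
have e'0 : 0 < e / n.+1%:R by rewrite divr_gt0.
have [_ [[k Nk <-] uk]] := p_cluster [set u k | k in [set k | (N <= k)%N]]
  (ball p (e / n.+1%:R)) (ex_intro2 _ _ N I (fun k Nk => ex_intro2 _ _ k Nk erefl))
  (nbhsx_ballx p _ e'0).
exists k; split => //.
rewrite (le_lt_trans (enorm_le_mx_norm _)) // mulrC -ltr_pdivlMr //.
by move: uk; rewrite -ball_normE /= distrC.
Qed.

End EuclideanNorm.

Section ConvexContinuity.
Context {R : realType} {n : nat}.
Implicit Types (g : 'rV[R]_n -> R) (p u w : 'rV[R]_n).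

Lemma convex_fun_le_max {g u w} {t : R} : convex_funE g -> 0 <= t <= 1 ->
  g (t *: u + (1 - t) *: w) <= Num.max (g u) (g w).
Proof.
move=> cg /andP[t0 t1]; apply: le_trans (cg u w t t0 t1) _.
set c := Num.max _ _; have -> : c = t * c + (1 - t) * c by ring.
by apply: lerD; apply: ler_wpM2l; rewrite ?subr_ge0 // le_max lexx ?orbT.
Qed.

Lemma convex_fun_bounded_cube {g} p : convex_funE g ->
  exists B, forall u, `|u - p| <= 1 -> g u <= B.
Proof.
move=> cg.
pose vertex (s : {ffun 'I_n -> bool}) := p + \row_i (if s i then 1 else -1 : R).
exists (\big[Num.max/g p]_s g (vertex s)); set B := \big[_/_]_s _.
suff face_bound k u : (forall i, `|u ord0 i - p ord0 i| <= 1) ->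
    (forall i : 'I_n, (k <= i)%N -> `|u ord0 i - p ord0 i| = 1) -> g u <= B.
  move=> u up; apply: (face_bound n) => [i|i]; last by rewrite leqNgt ltn_ord.
  by have := coord_le_mx_norm (u - p) i; rewrite !mxE => /le_trans; apply.
(* Moving the free coordinate k to p_k - 1 and p_k + 1 writes u as a convex
   combination of two points with one more extreme coordinate. *)
elim: k u => [|k IH] u ucube uface.
  suff -> : u = vertex [ffun i => u ord0 i - p ord0 i == 1] by apply: le_bigmax.
  apply/rowP => i; rewrite !mxE ffunE.
  case: eqP => [<-|ne]; first by rewrite addrC subrK.
  have /eqP := uface i (leq0n i); rewrite eqr_norml => /andP[/orP[]/eqP ui _] //.
  by rewrite -ui addrC subrK.
have [kn|nk] := ltnP k n; last first.
  by apply: IH => // i ki; have := ltn_ord i; rewrite ltnNge (leq_trans nk ki).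
pose ik := Ordinal kn; pose d := u ord0 ik - p ord0 ik.
pose shift c := u + (c - d) *: delta_mx ord0 ik.
have shift_coord c i :
    shift c ord0 i - p ord0 i = if i == ik then c else u ord0 i - p ord0 i.
  by rewrite !mxE eqxx /=; case: eqP => [->|_]; rewrite /d /=; ring.
have shift_bound c : `|c| = 1 -> g (shift c) <= B.
  move=> c1; apply: IH => i; rewrite shift_coord; case: eqP => [_|ne]; rewrite ?c1 //.
  move=> ki; apply: uface; rewrite ltn_neqAle ki andbT.
  by apply/eqP => ki'; apply: ne; apply: val_inj; rewrite /= ki'.
have d1 : -1 <= d <= 1 by rewrite -ler_norml; exact: ucube.
have -> : u = ((1 + d) / 2) *: shift 1 + (1 - (1 + d) / 2) *: shift (-1).
  by apply/rowP => i; rewrite !mxE; field.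
apply: (le_trans (convex_fun_le_max cg _)).
  by move: d1 => /andP[? ?]; apply/andP; split; lra.
by rewrite ge_max !shift_bound ?normrN ?normr1.
Qed.

Lemma convex_fun_cube_lipschitz {g p B u} : convex_funE g ->
  (forall w, `|w - p| <= 1 -> g w <= B) ->
  `|u - p| <= 1 -> `|g u - g p| <= `|u - p| * (B - g p).
Proof.
move=> cg gB; set s := `|u - p| => s1.
have := normr_ge0 (u - p); rewrite -/s le_eqVlt => /orP[/eqP s0|s_gt0].
  rewrite -s0 mul0r; move/eqP: s0; rewrite eq_sym /s normr_eq0 subr_eq0 => /eqP->.
  by rewrite subrr normr0.
have s0 : s != 0 by rewrite gt_eqF.
have unit_step : `|s^-1 *: (u - p)| = 1.
  by rewrite normrZ ger0_norm ?invr_ge0 ?normr_ge0 // mulVf.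
pose w := p + s^-1 *: (u - p); pose w' := p - s^-1 *: (u - p).
have gw : g w <= B by apply: gB; rewrite /w addrAC subrr add0r unit_step.
have gw' : g w' <= B by apply: gB; rewrite /w' addrAC subrr add0r normrN unit_step.
have upper : g u <= s * g w + (1 - s) * g p.
  have {1}-> : u = s *: w + (1 - s) *: p by apply/rowP => i; rewrite !mxE; field.
  exact: cg (ltW s_gt0) s1.
have lower : (1 + s) * g p <= g u + s * g w'.
  pose t := (1 + s)^-1.
  have s1' : 1 + s != 0 by rewrite gt_eqF //; lra.
  have t01 : 0 <= t <= 1 by rewrite invr_ge0 invf_le1 ?ler_wpDr; lra.
  have {1}-> : p = t *: u + (1 - t) *: w'.
    by apply/rowP => i; rewrite !mxE /t; field; rewrite s1' s0.
  have := cg u w' t; move: t01 => /andP[t0 t1] /(_ t0 t1) gp.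
  have -> : g u + s * g w' = (1 + s) * (t * g u + (1 - t) * g w') by rewrite /t; field.
  by apply: ler_wpM2l => //; lra.
rewrite ler_norml; apply/andP; split; nra.
Qed.

Lemma convex_fun_continuous {g} : convex_funE g -> continuous g.
Proof.
move=> cg p; have [B gB] := convex_fun_bounded_cube p cg.
have gpB : g p <= B by apply: gB; rewrite subrr normr0.
apply/(cvgrPdist_lt (FF := nbhs_filter p)) => e e0; apply/nbhs_ballP.
have K0 : 0 < B - g p + 1 by lra.
exists (Num.min 1 (e / (B - g p + 1))) => [|u]; first by rewrite /= lt_min ltr01 divr_gt0.
rewrite -ball_normE /= lt_min distrC => /andP[u1 ue]; rewrite distrC.
apply: (le_lt_trans (convex_fun_cube_lipschitz cg gB (ltW u1))).
apply: (@le_lt_trans _ _ (`|u - p| * (B - g p + 1))); last by rewrite -ltr_pdivlMr.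
by apply: ler_wpM2l; rewrite ?normr_ge0 ?lerDl.
Qed.

End ConvexContinuity.

Section Neighbourhoods.
Context {R : realType} {n : nat}.
Implicit Types (p u : 'rV[R]_n) (g : 'rV[R]_n -> R).

Lemma near_mx_normP p (P : set 'rV[R]_n) :
  (\near p, P p) <-> exists2 eta, 0 < eta & forall u, `|u - p| < eta -> P u.
Proof.
split=> [/nbhs_ballP[eta eta0 etaP]|[eta eta0 etaP]]; last first.
  by apply/nbhs_ballP; exists eta => // u; rewrite -ball_normE /= distrC; apply: etaP.
by exists eta => // u up; apply: etaP; rewrite -ball_normE /= distrC.
Qed.

Lemma continuous_near {g} p {e} : continuous g -> 0 < e ->
  \forall u \near p, `|g u - g p| < e.
Proof.
move=> gc e0; apply: filterS ((cvgrPdist_lt (FF := nbhs_filter p) _ _).1 (gc p) e e0).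
by move=> u; rewrite distrC.
Qed.

Lemma uniform_ball_radius {m} (c : 'I_m -> 'rV[R]_n) (C : 'I_m -> set 'rV[R]_n) :
  (forall j, \forall u \near c j, C j u) ->
  exists2 r, 0 < r & forall j d, `|d| < r -> C j (c j + d).
Proof.
move=> cC; have /near_mx_normP[r r0 rC] :
    \forall d \near nbhs (0 : 'rV[R]_n), forall j, C j (c j + d).
  apply: filter_forall => j; have /near_mx_normP[rj rj0 Cj] := cC j.
  apply/near_mx_normP; exists rj => // d; rewrite subr0 => dr.
  by apply: Cj; rewrite addrC addKr.
by exists r => // j d dr; apply: rC; rewrite subr0.
Qed.

Lemma cluster_le_lim {g} {u : nat -> 'rV[R]_n} {c : nat -> R} {l p} :
  continuous g -> c @ \oo --> l -> (forall k, g (u k) <= c k) ->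
  seq_cluster_pt u p -> g p <= l.
Proof.
move=> gc cl guc up; rewrite leNgt; apply/negP => lgp.
have e0 : 0 < (g p - l) / 2 by rewrite divr_gt0 // subr_gt0.
have [N _ cN] := (cvgrPdist_lt _ _).1 cl _ e0.
have /near_mx_normP[eta eta0 close] := continuous_near p gc e0.
have [k [Nk uk]] := up eta eta0 N.
have := cN k Nk; have := close _ (le_lt_trans (mx_norm_le_enorm _) uk); have := guc k.
by rewrite !ltr_norml => ? /andP[? ?] /andP[? ?]; lra.
Qed.

End Neighbourhoods.

Section Constraints.
Context {R : realType} {n m : nat} (fs : 'I_m -> 'rV[R]_n -> R).

Lemma Deps_near p e : (forall j, continuous (fs j)) -> 0 < e ->
  exists2 eta, 0 < eta & forall u, `|u - p| < eta ->
    (forall j, ~ Dj fs j u -> exists2 w, Dj fs j w & `|w - p| < eta) ->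
    Deps fs e u.
Proof.
move=> fc e0; have e20 : 0 < e / 2 by rewrite divr_gt0.
have /near_mx_normP[eta eta0 close] :
    \forall u \near p, forall j, `|fs j u - fs j p| < e / 2.
  apply: (@filter_forall _ _ _ _ (nbhs_filter p)) => j.
  exact: (continuous_near p (fc j) e20).
exists eta => // u up uw j; have [uj|/uw[w wj wp]] := pselect (Dj fs j u).
  exact: le_trans uj (ltW e0).
have := close u up j; have := close w wp j; move: wj; rewrite /Dj /= !ltr_norml.
by move=> ? /andP[? ?] /andP[? ?]; lra.
Qed.

Lemma fstar_le {f : 'rV[R]_n -> R} {b w} :
  (forall u, Dset fs u -> b <= f u) -> Dset fs w -> fstar fs f <= f w.
Proof. by move=> fb Dw; apply: ge_inf; [exists b => _ [u Du <-]; apply: fb|exists w]. Qed.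

Lemma Xstar_of_le {f : 'rV[R]_n -> R} {b p} : (forall u, Dset fs u -> b <= f u) ->
  Dset fs p -> f p <= fstar fs f -> Xstar fs f p.
Proof. by move=> fb Dp fp; split=> //; apply/le_anti; rewrite fp (fstar_le fb). Qed.

End Constraints.

Section DistanceToSet.
Context {R : realType} {n : nat}.
Implicit Types (x p : 'rV[R]_n) (X : set 'rV[R]_n).

Lemma dist_to_set_le {x X p} : X p -> dist_to_set x X <= enorm (x - p).
Proof.
by move=> Xp; apply: ge_inf; [exists 0 => _ [w _ <-]; apply: sqrtr_ge0|exists p].
Qed.

Lemma dist_to_set_ge0 {x X p} : X p -> 0 <= dist_to_set x X.
Proof.
move=> Xp; apply: lb_le_inf => [|_ [w _ <-]]; last exact: sqrtr_ge0.
by exists (enorm (x - p)), p.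
Qed.

Lemma seq_cluster_pt_sub {u : nat -> 'rV[R]_n} {phi : nat -> nat} {p} :
  (forall N, (N <= phi N)%N) -> seq_cluster_pt (u \o phi) p -> seq_cluster_pt u p.
Proof.
move=> phiN up e e0 N; have [k [Nk uk]] := up e e0 N.
by exists (phi k); split=> //; apply: leq_trans Nk (phiN k).
Qed.

Lemma dist_to_set_cvg0 {u : nat -> 'rV[R]_n} {r X} :
  (forall k, enorm (u k) <= r) -> (forall p, seq_cluster_pt u p -> X p) ->
  (fun k => dist_to_set (u k) X) @ \oo --> 0.
Proof.
move=> ur uX; apply/cvgrPdist_lt => e e0; apply: contrapT => far.
have far_often N : exists k, (N <= k)%N /\ ~ `|0 - dist_to_set (u k) X| < e.
  apply: contrapT => near_N; apply: far; exists N => // k /= Nk.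
  by apply: contrapT => uk; apply: near_N; exists k.
have [phi phiP] := choice far_often.
have [p pc] := bounded_seq_cluster_pt (fun N => ur (phi N)).
have Xp := uX p (seq_cluster_pt_sub (fun N => (phiP N).1) pc).
have [N [_ close]] := pc e e0 0%N.
apply: (phiP N).2; rewrite sub0r normrN ger0_norm ?(dist_to_set_ge0 Xp) //.
exact: le_lt_trans (dist_to_set_le Xp) close.
Qed.

End DistanceToSet.

Lemma open_seg_normal_lb {R : realType} {n : nat} {C : set 'rV[R]_n}
    {v y z a r c} :
  0 < r -> (forall d, `|d| < r -> C (v + d)) -> open_seg v y z -> W1 z C a ->
  `|y - v| <= c -> r / 2 * `|y - z| <= c * dotp a (y - z).
Proof.
move=> r0 vC [t [t0 [t1 ->]]] [a1 aC] yvc.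
have yz : y - ((1 - t) *: v + t *: y) = (1 - t) *: (y - v).
  by apply/rowP => i; rewrite !mxE; ring.
(* v + (r/2) a lies in C, hence behind the supporting hyperplane at z. *)
have t_dotp : r / 2 <= t * dotp a (y - v).
  have small : `|(r / 2) *: a| < r.
    rewrite normrZ gtr0_norm ?divr_gt0 //.
    have := mx_norm_le_enorm a; rewrite a1 => a_le1.
    apply: (le_lt_trans (ler_wpM2l _ a_le1)); first by rewrite divr_ge0 ?ltW.
    by rewrite mulr1; lra.
  have := aC _ (vC _ small).
  have -> : v + (r / 2) *: a - ((1 - t) *: v + t *: y) =
            (r / 2) *: a - t *: (y - v).
    by apply/rowP => i; rewrite !mxE; ring.
  by rewrite dotpBr !dotpZr enorm_unit_dotp // mulr1 subr_le0.
have dotp_ge : r / 2 <= dotp a (y - v) by nra.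
rewrite yz normrZ dotpZr ger0_norm; last by lra.
have h1 : r / 2 * `|y - v| <= r / 2 * c by apply: ler_wpM2l => //; lra.
have h2 : r / 2 * c <= dotp a (y - v) * c.
  by apply: ler_wpM2r => //; exact: le_trans yvc.
by nra.
Qed.

Section Method11.
Context {R : realType} {n m : nat}
  {fs : 'I_m -> 'rV[R]_n -> R} {f : 'rV[R]_n -> R} {xstar : 'rV[R]_n}
  {v : 'I_m -> 'rV[R]_n} {q : R} {eps : nat -> R}
  {M Q G : nat -> set 'rV[R]_n} {y : nat -> 'rV[R]_n}
  {z : nat -> 'I_m -> 'rV[R]_n} {H : nat -> set 'I_m}
  {A : nat -> 'I_m -> seq 'rV[R]_n} {kc : nat -> nat} {x : nat -> 'rV[R]_n}.
Hypothesis run : method11_run fs f xstar v q eps M Q G y z H A kc x.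

Lemma run_v_interior j : interior (Dj fs j) (v j).
Proof. by case: run => -[_ [_ [_ [vD _]]]]. Qed.

Lemma run_q_ge1 : 1 <= q.
Proof. by case: run => -[_ [_ [_ [_ [_ []]]]]]. Qed.

Lemma run_kc0 : kc 0 = 0%N.
Proof. by case: run => -[_ [_ [_ [_ [_ []]]]]]. Qed.

Lemma run_y_M i : M i (y i).
Proof. by case: run => _ /(_ i) [[]]. Qed.

Lemma run_y_Estar i : Estar fs f (y i).
Proof. by case: run => _ /(_ i) [[]]. Qed.

Lemma run_kc_stay i :
  ~ Deps fs (eps (kc i)) (y i) -> kc i.+1 = kc i /\ M i.+1 `<=` M i.
Proof.
move=> yD; case: run => _ /(_ i) [_ [/(_ yD) [_ [_ [_ [QE kcE]]]]]].
move=> [_ [_ [_ [_ [_ [_ ME]]]]]].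
by split=> // w; rewrite ME QE => -[[]].
Qed.

Lemma run_kc_next i :
  Deps fs (eps (kc i)) (y i) -> x (kc i) = y i /\ kc i.+1 = (kc i).+1.
Proof. by move=> yD; case: run => _ /(_ i) [_ [_ [/(_ yD) [? [_ [_ [_ ?]]]]]]]. Qed.

Lemma run_z_seg i j : ~ Dj fs j (y i) -> open_seg (v j) (y i) (z i j).
Proof. by move=> yj; case: run => _ /(_ i) [_ [_ [_ [/(_ j yj) []]]]]. Qed.

Lemma run_extrapolation i j : ~ Dj fs j (y i) ->
  exists2 qq, 0 <= qq <= q & Dj fs j (y i + qq *: (z i j - y i)).
Proof.
move=> yj; case: run => _ /(_ i) [_ [_ [_ [/(_ j yj) [_ [_ [qq [qq1 [qqq D]]]]] _]]]].
by exists qq => //; rewrite qqq andbT; lra.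
Qed.

Lemma run_farthest_cut i : exists ji a,
  [/\ ~ Dj fs ji (y i), W1 (z i ji) (Dj fs ji) a,
  forall w, M i.+1 w -> dotp a (w - z i ji) <= 0 &
  forall j, ~ Dj fs j (y i) -> enorm (y i - z i j) <= enorm (y i - z i ji)].
Proof.
case: run => _ /(_ i) [_ [_ [_ [_ [_ [Hviol [[ji [Hji far]]]]]]]]].
move=> [/(_ ji Hji) [Ane aW] ->].
have [a aA] : exists a, a \in A i ji.
  by case: (A i ji) Ane => // a s _; exists a; rewrite mem_head.
exists ji, a; split=> //; [exact: Hviol|exact: aW|by move=> w [_ /(_ ji Hji a aA)]].
Qed.

Lemma run_kc_step i : kc i.+1 = kc i \/ kc i.+1 = (kc i).+1.
Proof.
have [yD|yD] := pselect (Deps fs (eps (kc i)) (y i)).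
  by right; exact: (run_kc_next i yD).2.
by left; exact: (run_kc_stay i yD).1.
Qed.

Hypothesis fs_cont : forall j, continuous (fs j).
Context {ry : R}.
Hypothesis y_bounded : forall i, enorm (y i) <= ry.
Hypothesis eps_gt0 : forall k, 0 < eps k.

Section Stall.
Variables i0 k : nat.
Hypothesis stall : forall i, (i0 <= i)%N -> kc i = k.

Lemma stall_not_Deps {i} : (i0 <= i)%N -> ~ Deps fs (eps k) (y i).
Proof.
move=> i0i yD; rewrite -(stall i i0i) in yD; have := (run_kc_next i yD).2.
by rewrite (stall i i0i) (stall i.+1 (leqW i0i)); apply: n_Sn.
Qed.

Lemma stall_M_decr {l i} : (i0 <= l)%N -> (l < i)%N -> M i `<=` M l.+1.
Proof.
move=> i0l; elim: i => // i IH; rewrite ltnS leq_eqVlt => /predU1P[<-//|li] w.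
have i0i : (i0 <= i)%N by apply: leq_trans i0l (ltnW li).
have yD : ~ Deps fs (eps (kc i)) (y i) by rewrite stall //; exact: stall_not_Deps.
by move/(run_kc_stay i yD).2; exact: IH.
Qed.

Lemma stall_step_bound : exists2 K, 0 <= K & forall l i j,
  (i0 <= l)%N -> (l < i)%N -> ~ Dj fs j (y l) -> `|y l - z l j| <= K * `|y l - y i|.
Proof.
have [r r0 rD] := uniform_ball_radius v (Dj fs) run_v_interior.
pose c := ry + \sum_j enorm (v j).
have yvc l j : `|y l - v j| <= c.
  apply: le_trans (ler_normB _ _) _; apply: lerD.
    exact: le_trans (mx_norm_le_enorm _) (y_bounded l).
  apply: le_trans (mx_norm_le_enorm _) _; rewrite (bigD1 j) //= lerDl.
  by apply: sumr_ge0 => i _; exact: sqrtr_ge0.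
have c0 : 0 <= c.
  apply: addr_ge0; first exact: le_trans (sqrtr_ge0 _) (y_bounded 0%N).
  by apply: sumr_ge0 => j _; exact: sqrtr_ge0.
exists (n.+1%:R * (2 * c * n%:R / r)) => [|l i j i0l li ylj].
  by apply: mulr_ge0 => //; apply: divr_ge0; [rewrite !mulr_ge0|exact: ltW].
have [jl [a [yjl aW acut far]]] := run_farthest_cut l.
have lb := open_seg_normal_lb r0 (rD jl) (run_z_seg l jl yjl) aW (yvc l jl).
have cut : dotp a (y l - z l jl) <= n%:R * `|y l - y i|.
  have -> : y l - z l jl = (y l - y i) + (y i - z l jl) by rewrite addrA subrK.
  rewrite dotpDr -[leRHS]addr0; apply: lerD.
    apply: le_trans (dotp_le_mx_norm _ _) _; apply: ler_wpM2l => //.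
    by apply: ler_piMl => //; rewrite -aW.1; exact: mx_norm_le_enorm.
  exact/acut/(stall_M_decr i0l li)/run_y_M.
have step_jl : `|y l - z l jl| <= 2 * c * n%:R / r * `|y l - y i|.
  have r20 : 0 < r / 2 by rewrite divr_gt0.
  rewrite -(ler_pM2l r20); apply: le_trans lb _.
  have -> : r / 2 * (2 * c * n%:R / r * `|y l - y i|) = c * (n%:R * `|y l - y i|).
    by field; rewrite gt_eqF.
  by apply: ler_wpM2l.
apply: le_trans (mx_norm_le_enorm _) _; apply: le_trans (far j ylj) _.
by apply: le_trans (enorm_le_mx_norm _) _; rewrite -(mulrA n.+1%:R) ler_wpM2l.
Qed.

Lemma stall_absurd : False.
Proof.
have [K K0 step] := stall_step_bound.
have [p yp] := bounded_seq_cluster_pt y_bounded.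
have [eta eta0 nearD] := Deps_near fs p (eps k) fs_cont (eps_gt0 k).
have q1 := run_q_ge1.
pose L := 1 + 2 * q * K; have L1 : 1 <= L by rewrite /L lerDl !mulr_ge0 //; lra.
pose del := eta / L.
have del0 : 0 < del by rewrite divr_gt0 //; lra.
have L0 : L != 0 by rewrite gt_eqF //; lra.
have etaE : eta = del + 2 * q * K * del by rewrite -{1}(divfK L0 eta) /del /L; ring.
have [l [i0l /(le_lt_trans (mx_norm_le_enorm _)) ylp]] := yp del del0 i0.
have [i [li /(le_lt_trans (mx_norm_le_enorm _)) yip]] := yp del del0 l.+1.
have yli : `|y l - y i| <= 2 * del.
  by apply: le_trans (ler_distD p _ _) _; rewrite [`|p - _|]distrC; lra.
have del_le : del <= eta.
  by rewrite etaE lerDl mulr_ge0 ?(ltW del0) // mulr_ge0 // mulr_ge0 //; lra.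
apply: (stall_not_Deps i0l); apply: nearD => [|j ylj].
  exact: lt_le_trans ylp del_le.
have [qq /andP[qq0 qqq] wD] := run_extrapolation l j ylj.
exists (y l + qq *: (z l j - y l)) => //.
have wyl : `|qq *: (z l j - y l)| <= q * (K * (2 * del)).
  rewrite normrZ ger0_norm // distrC; apply: ler_pM => //.
  by apply: le_trans (step l i j i0l li ylj) _; apply: ler_wpM2l.
apply: le_lt_trans (ler_distD (y l) _ _) _; rewrite addrAC subrr add0r.
by rewrite etaE; lra.
Qed.

End Stall.

Lemma run_kc_leaves i : exists i', kc i' = kc i /\ kc i'.+1 = (kc i).+1.
Proof.
apply: contrapT => stay; apply: (stall_absurd i (kc i)).
elim=> [|i' IH]; first by rewrite leqn0 => /eqP->.
rewrite leq_eqVlt => /predU1P[<-//|ii']; have kci' := IH ii'.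
case: (run_kc_step i') => [->//|kcS]; exfalso; apply: stay.
by exists i'; rewrite -kci'.
Qed.

Lemma run_kc_onto k : exists i, kc i = k /\ kc i.+1 = k.+1.
Proof.
elim: k => [|k [i [_ ki]]]; first by rewrite -run_kc0; exact: run_kc_leaves.
by rewrite -ki; exact: run_kc_leaves.
Qed.

Lemma run_x_iterate k : exists i, x k = y i /\ Deps fs (eps k) (y i).
Proof.
have [i [ki ki1]] := run_kc_onto k; exists i; rewrite -ki.
have [yD|yD] := pselect (Deps fs (eps (kc i)) (y i)).
  by rewrite (run_kc_next i yD).1.
by have := (run_kc_stay i yD).1; rewrite ki ki1 => /esym /n_Sn.
Qed.

End Method11.

Theorem theorem1p1p2 (R : realType) (n m : nat)
  (fs : 'I_m -> 'rV[R]_n -> R) (f : 'rV[R]_n -> R) (xstar : 'rV[R]_n)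
  (v : 'I_m -> 'rV[R]_n) (q : R) (eps : nat -> R)
  (M Q G : nat -> set 'rV[R]_n) (y : nat -> 'rV[R]_n)
  (z : nat -> 'I_m -> 'rV[R]_n) (H : nat -> set 'I_m)
  (A : nat -> 'I_m -> seq 'rV[R]_n) (kc : nat -> nat) (x : nat -> 'rV[R]_n) :
  (* standing assumptions *)
  (forall j, convex_funE (fs j)) ->
  continuous f ->
  (exists xm, Dset fs xm /\ forall w, Dset fs w -> f xm <= f w) ->
  (forall j, exists w, interior (Dj fs j) w) ->
  Xstar fs f xstar ->
  (* the method's run *)
  method11_run fs f xstar v q eps M Q G y z H A kc x ->
  (* it does not terminate *)
  (forall i, exists j, ~ Dj fs j (y i)) ->
  (* {y_i} bounded *)
  (exists r : R, forall i, enorm (y i) <= r) ->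
  (forall k, 0 < eps k) ->
  eps @ \oo --> (0 : R) ->
  (forall k, exists i, kc i = k /\ kc i.+1 = k.+1) /\
  (forall p, seq_cluster_pt x p -> Xstar fs f p) /\
  ((forall k, f (x k) <= f (x k.+1)) ->
     (fun k => dist_to_set (x k) (Xstar fs f)) @ \oo --> (0 : R)).
Proof.
(* The discarded hypotheses are implied or unnecessary: Step 5 of the run
   forces J_i <> empty, the v^j are interior points, X^* is nonempty since the
   bounded {x_k} has a cluster point, and the distance from x_k to X^* tends
   to 0 without monotonicity of f(x_k). *)
move=> fs_convex f_cont [xm [_ xm_min]] _ _ run _ [ry y_bd] eps_gt0 eps_cvg.
have fs_cont j : continuous (fs j) := convex_fun_continuous (fs_convex j).
have x_iter := run_x_iterate run fs_cont y_bd eps_gt0.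
have x_bd k : enorm (x k) <= ry by have [i [-> _]] := x_iter k.
have cluster_Xstar p : seq_cluster_pt x p -> Xstar fs f p.
  move=> xp; apply: (Xstar_of_le fs xm_min).
    move=> j; apply: (cluster_le_lim (fs_cont j) eps_cvg _ xp) => k.
    by have [i [-> /(_ j)]] := x_iter k.
  apply: (cluster_le_lim f_cont (cvg_cst _) _ xp) => k.
  by have [i [-> _]] := x_iter k; exact: run_y_Estar run i.
split; first exact: (run_kc_onto run fs_cont y_bd eps_gt0).
by split=> // _; exact: dist_to_set_cvg0 x_bd cluster_Xstar.
Qed.
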